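(* Let $K$ be a finite field, let $L$ be the quadratic extension of $K$, and let $d$ be an integer with $\gcd(d,|L|-1)=1$. Then $\sum_{a\in K^\times}W_{L,d}(a)=|L|$.
   Context: For a finite field $F$ of characteristic $p$, $\psi_F(x)=\exp(2\pi i\,\mathrm{Tr}_{F/\mathbb{F}_p}(x)/p)$; for $a\in L$, $W_{L,d}(a)=\sum_{x\in L}\psi_L(x^d+ax)$. *)

From HB Require Import structures.
From mathcomp Require Import all_boot all_order all_algebra all_field.
Set Implicit Arguments. Unset Strict Implicit. Unset Printing Implicit Defensive.
Import Order.TTheory GRing.Theory Num.Theory.
Local Open Scope ring_scope.

(* The characteristic p of a finite field F: the (unique) prime dividing #|F|. *)
Definition fchar (F : finFieldType) : nat := pdiv #|F|.

Definition fdeg (F : finFieldType) : nat := logn (fchar F) #|F|.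

Definition absTr (F : finFieldType) (x : F) : F :=
  \sum_(i < fdeg F) x ^+ (fchar F ^ i).

Definition absTr_nat (F : finFieldType) (x : F) : nat :=
  odflt 0%N (omap (@nat_of_ord _) [pick k : 'I_(fchar F) | (k%:R : F) == absTr x]).

(* exp(2 pi i / n) in algC: n.-root (-1) = exp(i pi / n), squared. *)
Definition e2pi (n : nat) : algC := (n.-root (-1)) ^+ 2.

Definition psi (F : finFieldType) (x : F) : algC :=
  e2pi (fchar F) ^+ absTr_nat x.

Definition W (L : finFieldType) (d : nat) (a : L) : algC :=
  \sum_(x : L) psi (x ^+ d + a * x).

From HB Require Import structures.
From mathcomp Require Import all_boot all_order all_algebra all_field.
From mathcomp Require Import zify ring.
Set Implicit Arguments. Unset Strict Implicit. Unset Printing Implicit Defensive.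
Import Order.TTheory GRing.Theory Num.Theory.
Local Open Scope ring_scope.

(* Put [T x := \sum_(a : K) psi (f a * x)].  As [psi] is a nontrivial additive character,
   [T x = 0] unless the relative trace [x + x ^+ #|K|] vanishes, and then [x ^+ d] has zero
   relative trace too ([d] is odd), so [psi (x ^+ d) = 1].  Hence
   [\sum_(a != 0) W d (f a) = \sum_x psi (x ^+ d) * (T x - 1) = \sum_x T x - \sum_x psi (x ^+ d)],
   where [\sum_x T x = #|L|] by orthogonality and [\sum_x psi (x ^+ d) = \sum_x psi x = 0]
   since [x |-> x ^+ d] permutes [L]. *)

Lemma card_finField_gt1 (F : finFieldType) : (1 < #|F|)%N.
Proof. by have := finNzRing_gt1 F; rewrite -cardsT cardsE. Qed.

Lemma fcharP (F : finFieldType) :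
  [/\ prime (fchar F), fchar F \in [pchar F] & #|F| = (fchar F ^ fdeg F)%N].
Proof.
have [p p_pr pchFp] := finPcharP F.
have cardF : #|F| = (p ^ logn p #|F|)%N := card_pprimeChar pchFp.
have [k logF] : exists k, logn p #|F| = k.+1.
  case: (logn p #|F|) cardF => [|k] cardF; last by exists k.
  by have := card_finField_gt1 F; rewrite cardF.
have pF : fchar F = p by rewrite /fchar cardF logF pdiv_pfactor.
by rewrite /fdeg pF; split.
Qed.

Lemma fdeg_gt0 (F : finFieldType) : (0 < fdeg F)%N.
Proof.
have [_ _ cardF] := fcharP F; have := card_finField_gt1 F.
by rewrite cardF; case: (fdeg F).
Qed.

Lemma fchar_fmorph (K L : finFieldType) (f : {rmorphism K -> L}) :
  fchar K = fchar L.
Proof.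
have [_ pchK _] := fcharP K; have [_ pchL _] := fcharP L.
have : fchar K \in [pchar L] by rewrite (fmorph_pchar f).
by rewrite (pcharf_eq pchL) => /eqP.
Qed.

Lemma expr0_fchar (F : finFieldType) i : (0 : F) ^+ (fchar F ^ i) = 0.
Proof. by have [p_pr _ _] := fcharP F; rewrite expr0n expn_eq0 eqn0Ngt prime_gt0. Qed.

Lemma exprD_fchar (F : finFieldType) (x y : F) i :
  (x + y) ^+ (fchar F ^ i) = x ^+ (fchar F ^ i) + y ^+ (fchar F ^ i).
Proof.
have [p_pr pchFp _] := fcharP F.
by apply: exprDn_pchar; rewrite (eq_pnat _ (pcharf_eq pchFp)) pnatX pnat_id.
Qed.

Lemma expr_sum_fchar (F : finFieldType) (I : Type) (r : seq I) (P : pred I)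
    (G : I -> F) i :
  (\sum_(j <- r | P j) G j) ^+ (fchar F ^ i) =
  \sum_(j <- r | P j) G j ^+ (fchar F ^ i).
Proof.
by apply: (big_morph (fun x => x ^+ (fchar F ^ i)%N)) => [x y|];
   [exact: exprD_fchar | exact: expr0_fchar].
Qed.

Lemma absTrD (F : finFieldType) (x y : F) : absTr (x + y) = absTr x + absTr y.
Proof. by rewrite /absTr -big_split; apply: eq_bigr => i _; rewrite exprD_fchar. Qed.

Lemma absTr0 (F : finFieldType) : absTr (0 : F) = 0.
Proof. by apply: big1 => i _; rewrite expr0_fchar. Qed.

(* The Frobenius map permutes the terms of the trace cyclically, since x ^+ #|F| = x. *)
Lemma absTr_fchar (F : finFieldType) (x : F) : absTr x ^+ fchar F = absTr x.
Proof.
have [_ _ cardF] := fcharP F.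
rewrite -[X in _ ^+ X]expn1 expr_sum_fchar /absTr.
under eq_bigr do rewrite -exprM -expnSr.
have := fdeg_gt0 F; case: (fdeg F) cardF => // n cardF _.
by rewrite big_ord_recr big_ord_recl /= -cardF expf_card addrC.
Qed.

Lemma natr_inj_fchar (F : finFieldType) (i j : nat) :
  (i < fchar F)%N -> (j < fchar F)%N -> i%:R = j%:R :> F -> i = j.
Proof.
have [_ pchFp _] := fcharP F.
wlog le_ij : i j / (i <= j)%N.
  by move=> IH ltip ltjp eq_ij; case: (leqP i j) => [|/ltnW] le;
     [exact: IH | apply/esym/IH].
move=> _ ltjp eq_ij.
have : (fchar F %| j - i)%N by rewrite (dvdn_pcharf pchFp) natrB // eq_ij subrr.
rewrite /dvdn modn_small; lia.
Qed.

(* Otherwise [t] and the [p] distinct values [k%:R] would be [p + 1] roots of ['X^p - 'X]. *)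
Lemma fchar_fixed_natr (F : finFieldType) (t : F) :
  t ^+ fchar F = t -> exists2 k, (k < fchar F)%N & t = k%:R.
Proof.
have [p_pr pchFp _] := fcharP F; set p := fchar F in p_pr pchFp *.
move=> tp_t; case: (pickP (fun k : 'I_p => t == k%:R)) => [k /eqP| not_natr].
  by exists k.
pose P : {poly F} := 'X^p - 'X.
have sizeP : size P = p.+1.
  by rewrite /P size_polyDl ?size_polyXn ?size_polyN ?size_polyX ?ltnS ?prime_gt1.
have rootP z : z ^+ p = z -> root P z by move=> zp_z; rewrite /root /P !hornerE zp_z subrr.
pose ks := [seq (k%:R : F) | k <- iota 0 p].
have rootsP : all (root P) (t :: ks).
  rewrite /= rootP //=; apply/allP => _ /mapP [k _ ->].
  exact/rootP/(pFrobenius_aut_nat pchFp).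
have uniq_ks : uniq (t :: ks).
  rewrite /= map_inj_in_uniq ?iota_uniq ?andbT; last first.
    by move=> i j; rewrite !mem_iota; apply: natr_inj_fchar.
  apply/mapP => -[k]; rewrite mem_iota => ltkp t_k.
  by have := not_natr (Ordinal ltkp); rewrite /= t_k eqxx.
have := max_poly_roots _ rootsP uniq_ks.
by rewrite -size_poly_eq0 sizeP /= size_map size_iota ltnn => /(_ isT).
Qed.

Lemma absTr_natP (F : finFieldType) (x : F) :
  (absTr_nat x < fchar F)%N /\ (absTr_nat x)%:R = absTr x.
Proof.
rewrite /absTr_nat; case: pickP => [k /eqP -> | not_natr] /=; first by [].
have [m ltmp trx] := fchar_fixed_natr (absTr_fchar x).
by have := not_natr (Ordinal ltmp); rewrite /= trx eqxx.
Qed.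

(* [n.-root] picks the root with nonnegative imaginary part of maximal real part; among the
   [n]-th roots of [-1] a primitive [2n]-th root of unity, or its conjugate, beats [-1]. *)
Lemma rootCN1_neq_N1 (n : nat) : (1 < n)%N -> n.-root (-1 : algC) != -1.
Proof.
move=> n_gt1; have n_gt0 := ltnW n_gt1; apply/eqP => rootN1.
have [z prim_z] : {z : algC | (2 * n).-primitive_root z}.
  by apply: C_prim_root_exists; rewrite muln_gt0.
have zn : z ^+ n = -1.
  have : (z ^+ n) ^+ 2 == 1 by rewrite -exprM mulnC prim_expr_order.
  rewrite sqrf_eq1 => /orP[|/eqP //].
  by rewrite -(expr0 z) (eq_prim_root_expr prim_z) mod0n modn_small //; lia.
pose y := if 0 <= 'Im z then z else z^*.
have yn : y ^+ n = -1 by rewrite /y; case: ifP => // _; rewrite -rmorphXn zn rmorphN1.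
have Im_y : 0 <= 'Im y.
  rewrite /y; case: ifPn => // Im_z; rewrite Im_conj oppr_ge0 ltW //.
  by rewrite real_ltNge ?Creal_Im ?real0.
have Re_y : 'Re y <= -1.
  have := rootC_Re_max n_gt0 yn Im_y.
  by rewrite rootN1 [X in _ <= X](Creal_ReP _ _) ?rpredN ?rpred1.
have norm_y : `|y| = 1.
  by apply/eqP; rewrite -(pexpr_eq1 n_gt0) ?normr_ge0 // -normrX yn normrN normr1.
have y_N1 : y = -1.
  have normDy1 : `|y + 1| ^+ 2 = 2 * ('Re y + 1).
    rewrite normCK rmorphD rmorph1 ReE mulrDl !mulrDr -normCK norm_y expr1n.
    by rewrite mulr1 mul1r mulrCA divff ?pnatr_eq0 // mulr1; ring.
  have : `|y + 1| ^+ 2 == 0.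
    rewrite eq_le exprn_ge0 ?normr_ge0 // normDy1 pmulr_rle0 ?ltr0n //.
    by rewrite -[0](addNr 1) lerD2r andbT.
  by rewrite sqrf_eq0 normr_eq0 addr_eq0 => /eqP.
have z_N1 : z = -1.
  by move: y_N1; rewrite /y; case: ifP => // _ /(congr1 Num.conj); rewrite conjCK rmorphN1.
have : z ^+ 2 == z ^+ 0 by rewrite z_N1 expr0 sqrrN expr1n.
by rewrite (eq_prim_root_expr prim_z) mod0n modn_small //; lia.
Qed.

Lemma e2pi_prim (p : nat) : prime p -> p.-primitive_root (e2pi p).
Proof.
move=> p_pr; have p_gt0 := prime_gt0 p_pr.
have rootN1p : p.-root (-1 : algC) ^+ p = -1 by apply: rootCK.
have e2pip : e2pi p ^+ p = 1 by rewrite /e2pi -exprM mulnC exprM rootN1p sqrrN expr1n.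
have [m prim_m m_dvd_p] := prim_order_exists p_gt0 e2pip.
have [m1 | m_neq1] := eqVneq m 1%N; last first.
  by move/(prime_nt_dvdP p_pr m_neq1): m_dvd_p => mp; rewrite mp in prim_m.
move: (prim_expr_order prim_m); rewrite m1 expr1 /e2pi => /eqP.
rewrite sqrf_eq1 => /orP[] /eqP root1.
  by move: rootN1p; rewrite root1 expr1n => /eqP; rewrite -addr_eq0 (pnatr_eq0 _ 2).
by have := rootCN1_neq_N1 (prime_gt1 p_pr); rewrite root1 eqxx.
Qed.

Lemma psiD (F : finFieldType) (x y : F) : psi (x + y) = psi x * psi y.
Proof.
have [p_pr pchFp _] := fcharP F.
have [ltxp trx] := absTr_natP x; have [ltyp try] := absTr_natP y.
have [ltxyp trxy] := absTr_natP (x + y).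
rewrite /psi -exprD -[in RHS](expr_mod _ (prim_expr_order (e2pi_prim p_pr))).
congr (_ ^+ _); apply: (@natr_inj_fchar F); rewrite ?ltn_mod ?prime_gt0 //.
by rewrite (GRing.natr_mod_pchar pchFp) natrD trxy trx try absTrD.
Qed.

Lemma psi_eq1 (F : finFieldType) (x : F) : (psi x == 1) = (absTr x == 0).
Proof.
have [p_pr _ _] := fcharP F; have [ltxp trx] := absTr_natP x.
rewrite /psi -(expr0 (e2pi (fchar F))) (eq_prim_root_expr (e2pi_prim p_pr)) mod0n modn_small //.
apply/eqP/eqP => [trx0 | trx0]; first by rewrite -trx trx0.
by apply: (@natr_inj_fchar F); rewrite ?prime_gt0 // trx trx0.
Qed.

Lemma psi0 (F : finFieldType) : psi (0 : F) = 1.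
Proof. by apply/eqP; rewrite psi_eq1 absTr0. Qed.

Lemma sum_addchar_eq0 (G : finZmodType) (R : idomainType) (chi : G -> R) (b : G) :
  {morph chi : x y / x + y >-> x * y} -> chi b != 1 -> \sum_(x : G) chi x = 0.
Proof.
move=> chiD chib_neq1.
have sum_shift : \sum_(x : G) chi x = (\sum_(x : G) chi x) * chi b.
  by rewrite [LHS](reindex_inj (addIr b)) mulr_suml; apply: eq_bigr => x _; rewrite chiD.
have : (\sum_(x : G) chi x) * (1 - chi b) = 0 by rewrite mulrBr mulr1 -sum_shift subrr.
by move/eqP; rewrite mulf_eq0 subr_eq0 [1 == _]eq_sym (negbTE chib_neq1) orbF => /eqP.
Qed.

(* [\sum_(i < m) 'X^(p ^ i)] is a nonzero polynomial of degree [p ^ m.-1]. *)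
Lemma exists_frobenius_sum_neq0 (F : finFieldType) (m : nat) (s : seq F) :
    (0 < m)%N -> uniq s -> (fchar F ^ m.-1 < size s)%N ->
  exists2 z, z \in s & \sum_(i < m) z ^+ (fchar F ^ i) != 0.
Proof.
have [p_pr _ _] := fcharP F; set p := fchar F in p_pr *.
move=> m_gt0 uniq_s size_s.
pose P : {poly F} := \sum_(i < m) 'X^(p ^ i).
have P_z z : P.[z] = \sum_(i < m) z ^+ (p ^ i).
  by rewrite horner_sum; apply: eq_bigr => i _; rewrite hornerXn.
have ltm : (m.-1 < m)%N by rewrite prednK.
have lead_P : P`_(p ^ m.-1) = 1.
  rewrite /P coef_sum (bigD1 (Ordinal ltm)) //= coefXn eqxx big1 ?addr0 //.
  move=> i /eqP neq_i; rewrite coefXn eqn_exp2l ?prime_gt1 //.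
  by case: eqP => // eq_i; case: neq_i; apply: val_inj.
have P_neq0 : P != 0 by apply: contra_eq_neq lead_P => ->; rewrite coef0 eq_sym oner_eq0.
have size_P : (size P <= (p ^ m.-1).+1)%N.
  apply: leq_trans (size_sum _ _ _) _; apply/bigmax_leqP => i _.
  by rewrite size_polyXn ltnS leq_pexp2l ?prime_gt0 // -ltnS prednK.
have [all_roots | /allPn [z z_s not_root]] := boolP (all (root P) s).
  by have := max_poly_roots P_neq0 all_roots uniq_s; rewrite ltnNge (leq_trans size_P).
by exists z; rewrite // -P_z.
Qed.

Lemma absTr_neq0 (F : finFieldType) : exists y : F, absTr y != 0.
Proof.
have [p_pr _ cardF] := fcharP F; have fdeg_pos := fdeg_gt0 F.
have [|y _ tr_y] := @exists_frobenius_sum_neq0 F (fdeg F) (enum F) fdeg_pos (enum_uniq _).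
  by rewrite -cardE cardF ltn_exp2l ?prime_gt1 // prednK.
by exists y.
Qed.

Lemma sum_psi (F : finFieldType) : \sum_(y : F) psi y = 0.
Proof.
have [y tr_y] := absTr_neq0 F.
by apply: (sum_addchar_eq0 (b := y)) => [u v|]; rewrite ?psiD ?psi_eq1.
Qed.

Lemma expf_coprime_inj (F : finFieldType) (d : nat) :
  (0 < d)%N -> coprime d #|F|.-1 -> injective (fun x : F => x ^+ d).
Proof.
move=> d_gt0 /(coprimeP _ d_gt0) [[u v] /= uv1].
have ud : (u * d = 1 + v * #|F|.-1)%N by rewrite -uv1 subnK // ltnW // -subn_gt0 uv1.
apply: (@can_inj _ _ _ (fun y : F => y ^+ u)) => x /=.
rewrite -exprM mulnC ud exprD expr1 mulnC exprM.
have [-> | x_neq0] := eqVneq x 0; first by rewrite mul0r.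
suff -> : x ^+ #|F|.-1 = 1 by rewrite expr1n mulr1.
apply: (mulIf x_neq0); rewrite mul1r -exprSr prednK ?expf_card //.
exact: ltnW (card_finField_gt1 F).
Qed.

Lemma signr_expf_coprime (F : finFieldType) (d : nat) :
  (0 < d)%N -> coprime d #|F|.-1 -> (-1 : F) ^+ d = -1.
Proof.
move=> d_gt0 d_coprime; case d_odd: (odd d); first by rewrite -signr_odd d_odd expr1.
have N1_1 : (-1 : F) = 1.
  by apply: (expf_coprime_inj d_gt0 d_coprime); rewrite /= expr1n -signr_odd d_odd.
by rewrite N1_1 expr1n.
Qed.

Lemma sum_psi_expf (F : finFieldType) (d : nat) :
  (0 < d)%N -> coprime d #|F|.-1 -> \sum_(x : F) psi (x ^+ d) = 0.
Proof.
move=> d_gt0 d_coprime; rewrite -[RHS](sum_psi F).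
by rewrite [RHS](reindex_inj (expf_coprime_inj d_gt0 d_coprime)).
Qed.

Lemma sum_sum_psi_fmorph (K L : finFieldType) (f : {rmorphism K -> L}) :
  \sum_(x : L) \sum_(a : K) psi (f a * x) = #|L|%:R.
Proof.
rewrite exchange_big (bigD1 0) //= [X in _ + X]big1 => [|a a_neq0].
  by rewrite addr0 rmorph0; under eq_bigr do rewrite mul0r psi0; rewrite sumr_const.
have fa_neq0 : f a != 0 by rewrite fmorph_eq0.
by rewrite -[RHS](sum_psi L) [RHS](reindex_inj (mulfI fa_neq0)).
Qed.

Section QuadraticExtension.

Variables (K L : finFieldType) (f : {rmorphism K -> L}).
Hypothesis cardL : #|L| = (#|K| ^ 2)%N.

Lemma fdeg_ext2 : fdeg L = (fdeg K + fdeg K)%N.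
Proof.
have [p_pr _ cardK] := fcharP K; have [_ _ cardL_fdeg] := fcharP L.
move: cardL; rewrite cardL_fdeg cardK (fchar_fmorph f) -expnM.
by move/expnI => -> //; [lia | rewrite -(fchar_fmorph f) prime_gt1].
Qed.

(* [Tr_{L/F_p} = Tr_{K/F_p} \o Tr_{L/K}], with [Tr_{L/K} y = y + y ^+ #|K|]. *)
Lemma absTr_ext2 (y : L) :
  absTr y = \sum_(i < fdeg K) (y + y ^+ #|K|) ^+ (fchar L ^ i).
Proof.
have [_ _ cardK] := fcharP K.
rewrite /absTr fdeg_ext2 big_split_ord /= -big_split; apply: eq_bigr => i _.
by rewrite exprD_fchar expnD -exprM cardK (fchar_fmorph f).
Qed.

Lemma psi_ext2_eq1 (y : L) : y ^+ #|K| = - y -> psi y = 1.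
Proof.
move=> yq; apply/eqP; rewrite psi_eq1 absTr_ext2 yq subrr.
by rewrite big1 // => i _; rewrite expr0_fchar.
Qed.

Lemma sum_psi_fmorph_eq0 (x : L) :
  x + x ^+ #|K| != 0 -> \sum_(a : K) psi (f a * x) = 0.
Proof.
have [p_pr _ cardK] := fcharP K.
set c := x + x ^+ #|K| => c_neq0.
have uniq_s : uniq [seq f a * c | a <- enum K].
  by rewrite map_inj_uniq ?enum_uniq // => a b /(mulIf c_neq0) /fmorph_inj.
have [|_ /mapP [b _ ->] trb] := exists_frobenius_sum_neq0 (fdeg_gt0 K) uniq_s.
  by rewrite size_map -cardE cardK -(fchar_fmorph f) ltn_exp2l ?prime_gt1 ?prednK ?fdeg_gt0.
apply: (sum_addchar_eq0 (b := b)) => [u v|]; first by rewrite rmorphD mulrDl psiD.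
by rewrite psi_eq1 absTr_ext2 exprMn -rmorphXn expf_card -mulrDr.
Qed.

Variable d : nat.
Hypotheses (d_gt0 : (0 < d)%N) (d_coprime : coprime d #|L|.-1).

Lemma psi_expr_sum_fmorph (x : L) :
  psi (x ^+ d) * \sum_(a : K) psi (f a * x) = \sum_(a : K) psi (f a * x).
Proof.
have [c_eq0 | c_neq0] := eqVneq (x + x ^+ #|K|) 0; last first.
  by rewrite sum_psi_fmorph_eq0 // mulr0.
have xq : x ^+ #|K| = - x by apply/eqP; rewrite -addr_eq0 addrC c_eq0.
rewrite psi_ext2_eq1 ?mul1r // -exprM mulnC exprM xq -mulN1r exprMn.
by rewrite signr_expf_coprime // mulN1r.
Qed.

End QuadraticExtension.

Theorem lemma2p5 (K L : finFieldType) (f : {rmorphism K -> L})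
  (hL : #|L| = (#|K| ^ 2)%N) (d : nat) (hd : coprime d #|L|.-1) :
  \sum_(a : K | a != 0) W d (f a) = (#|L|)%:R.
Proof.
have d_gt0 : (0 < d)%N.
  move: hd; rewrite lt0n; apply: contraTneq => ->; rewrite /coprime gcd0n hL.
  by have := card_finField_gt1 K; case: #|K| => [|[|q]] //; rewrite expnS; lia.
rewrite /W exchange_big /=.
transitivity (\sum_(x : L) (\sum_(a : K) psi (f a * x) - psi (x ^+ d))).
  apply: eq_bigr => x _.
  rewrite -(psi_expr_sum_fmorph f hL d_gt0 hd x) [in RHS](bigD1 0) //= rmorph0 mul0r psi0.
  by rewrite mulrDr mulr1 addrAC subrr add0r mulr_sumr; apply: eq_bigr => a _; rewrite psiD.
by rewrite sumrB sum_sum_psi_fmorph sum_psi_expf // subr0.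
Qed.
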